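(* Let $\mathcal{K}$ be a finite-dimensional complex Hilbert space with inner product $\langle\cdot,\cdot\rangle$, let $S$ be a strictly positive operator on $\mathcal{K}$, let $\mathcal{K}_0\subset\mathcal{K}$ be a linear subspace with basis $\{e_i\}_{i=1}^d$, and define $d\times d$ matrices $K^{(1)}_{ij}=\langle e_i,Se_j\rangle$, $K^{(2)}_{ij}=\langle e_i,e_j\rangle$, $K^{(3)}_{ij}=\langle e_i,S^{-1}e_j\rangle$. Then the following are equivalent: (i) $S(\mathcal{K}_0)=\mathcal{K}_0$; (ii) $(K^{(3)})^{-1}=(K^{(2)})^{-1}K^{(1)}(K^{(2)})^{-1}$. *)

From HB Require Import structures.
From mathcomp Require Import all_boot all_order all_algebra.
From mathcomp Require Import complex reals.
Set Implicit Arguments. Unset Strict Implicit. Unset Printing Implicit Defensive.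
Import Order.TTheory GRing.Theory Num.Theory.
Local Open Scope ring_scope.

Definition adjmx (C : numClosedFieldType) m n (A : 'M[C]_(m, n)) : 'M[C]_(n, m) :=
  (map_mx Num.conj A)^T.

(* Standard inner product on C^n (column vectors), conjugate-linear in the
   first argument: <x, y> = sum_k conj(x_k) y_k. *)
Definition ip (C : numClosedFieldType) n (x y : 'cV[C]_n) : C :=
  (adjmx x *m y) 0 0.

Definition strictly_positive (C : numClosedFieldType) n (S : 'M[C]_n) : Prop :=
  adjmx S = S /\ (forall x : 'cV[C]_n, x != 0 -> 0 < ip x (S *m x)).

(* Linear independence of the columns of E (the family e_1..e_d). *)
Definition lin_indep (C : numClosedFieldType) n d (E : 'M[C]_(n, d)) : Prop :=
  forall c : 'cV[C]_d, E *m c = 0 -> c = 0.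

Definition in_span (C : numClosedFieldType) n d (E : 'M[C]_(n, d)) (x : 'cV[C]_n) : Prop :=
  exists c : 'cV[C]_d, x = E *m c.

Definition gram (C : numClosedFieldType) n d (E : 'M[C]_(n, d)) (A : 'M[C]_n) : 'M[C]_d :=
  \matrix_(i < d, j < d) ip (col i E) (A *m col j E).

From HB Require Import structures.
From mathcomp Require Import all_boot all_order all_algebra.
From mathcomp Require Import complex reals sesquilinear spectral.
Set Implicit Arguments. Unset Strict Implicit. Unset Printing Implicit Defensive.
Import Order.TTheory GRing.Theory Num.Theory.
Local Open Scope ring_scope.

(** Write [K_A = E^* A E], so [K1 = K_S], [K2 = K_1], [K3 = K_(S^-1)].
  If [S E = E M] then [K2 M = K1] and [K3 M = K2], which gives
  [K3^-1 = M K2^-1 = K2^-1 K1 K2^-1].  Conversely, for [N = K3^-1 K2] the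
  defect [X = S E - E N] satisfies [X^* S^-1 X = K1 - K2 K3^-1 K2], which
  vanishes under (ii); as [S^-1] is strictly positive, [X = 0].  So [S] maps
  the span of [E] into itself through the invertible matrix [N], which makes
  it onto. *)

Section Adjoint.
Variable C : numClosedFieldType.

Lemma adjmxM m n p (A : 'M[C]_(m, n)) (B : 'M[C]_(n, p)) :
  adjmx (A *m B) = adjmx B *m adjmx A.
Proof. by rewrite /adjmx map_mxM trmx_mul. Qed.

Lemma adjmxK m n (A : 'M[C]_(m, n)) : adjmx (adjmx A) = A.
Proof. by apply/matrixP => i j; rewrite !mxE conjCK. Qed.

Lemma adjmxB m n (A B : 'M[C]_(m, n)) : adjmx (A - B) = adjmx A - adjmx B.
Proof. by apply/matrixP => i j; rewrite !mxE rmorphB. Qed.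

Lemma adjmx_inv n (A : 'M[C]_n) : adjmx (invmx A) = invmx (adjmx A).
Proof. by rewrite /adjmx map_invmx trmx_inv. Qed.

Lemma adjmx_eq0 m n (A : 'M[C]_(m, n)) : (adjmx A == 0) = (A == 0).
Proof.
apply/eqP/eqP => [A0|->]; last by apply/matrixP => i j; rewrite !mxE conjC0.
by rewrite -[A]adjmxK A0; apply/matrixP => i j; rewrite !mxE conjC0.
Qed.

Lemma ip_gt0 n (x : 'cV[C]_n) : (0 < ip x x) = (x != 0).
Proof.
have -> : ip x x = dotmx (adjmx x) (adjmx x).
  rewrite dotmxE /ip; congr (fun M : 'M_1 => M 0 0); congr (_ *m _).
  by apply/matrixP => i j; rewrite !mxE conjCK.
by rewrite dnorm_gt0 adjmx_eq0.
Qed.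

Lemma gramE n d (E : 'M[C]_(n, d)) (A : 'M[C]_n) :
  gram E A = adjmx E *m A *m E.
Proof.
apply/matrixP => i j; rewrite mxE /ip.
have -> : adjmx (col i E) = row i (adjmx E) by apply/matrixP => ? ?; rewrite !mxE.
by rewrite mulmxA -row_mul !mxE; apply: eq_bigr => k _; rewrite !mxE.
Qed.

End Adjoint.

Section Positive.
Variables (C : numClosedFieldType) (n : nat).
Implicit Types S : 'M[C]_n.

Lemma strictly_positive1 : strictly_positive (1%:M : 'M[C]_n).
Proof.
split; first by rewrite /adjmx map_mx1 trmx1.
by move=> x x0; rewrite mul1mx ip_gt0.
Qed.

Lemma strictly_positive_form_eq0 m S (X : 'M[C]_(n, m)) :
  strictly_positive S -> adjmx X *m S *m X = 0 -> X = 0.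
Proof.
move=> [_ Spos] XSX0; apply/matrixP => i j.
have : ip (col j X) (S *m col j X) = 0.
  by have := congr1 (fun K : 'M_m => K j j) (gramE X S); rewrite XSX0 !mxE.
have [/matrixP/(_ i 0)|/Spos/gt_eqF/eqP //] := eqVneq (col j X) 0.
by rewrite !mxE.
Qed.

Lemma lin_indep_unitmx (A : 'M[C]_n) : lin_indep A -> A \in unitmx.
Proof.
move=> Aind; rewrite -unitmx_tr unitmxE unitfE; apply/det0P => -[v v0].
move/(congr1 trmx); rewrite trmx_mul trmxK trmx0 => /Aind /(congr1 trmx).
by rewrite trmxK trmx0 => v0'; rewrite v0' eqxx in v0.
Qed.

Lemma strictly_positive_unitmx S : strictly_positive S -> S \in unitmx.
Proof.
move=> Spos; apply: lin_indep_unitmx => x Sx0.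
by apply: (strictly_positive_form_eq0 Spos); rewrite -mulmxA Sx0 mulmx0.
Qed.

Lemma strictly_positive_inv S : strictly_positive S -> strictly_positive (invmx S).
Proof.
move=> Spos; have Su := strictly_positive_unitmx Spos; case: Spos => Sadj Spos.
split=> [|x x0]; first by rewrite adjmx_inv Sadj.
have y0 : invmx S *m x != 0.
  by apply: contraNneq x0 => y0; rewrite -[x](mulKVmx Su) y0 mulmx0.
have := Spos _ y0; rewrite /ip mulKVmx // adjmxM adjmx_inv Sadj.
by rewrite mulmxA.
Qed.

End Positive.

Section Gram.
Variables (C : numClosedFieldType) (n d : nat) (E : 'M[C]_(n, d)).

Lemma gram_adj (A : 'M[C]_n) : adjmx A = A -> adjmx (gram E A) = gram E A.
Proof. by move=> Aadj; rewrite gramE !adjmxM adjmxK Aadj mulmxA. Qed.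

Lemma gram_unitmx (A : 'M[C]_n) :
  strictly_positive A -> lin_indep E -> gram E A \in unitmx.
Proof.
move=> Apos Eind; apply: lin_indep_unitmx => c; rewrite gramE => Kc0.
apply: Eind; apply: (strictly_positive_form_eq0 Apos).
have -> : adjmx (E *m c) *m A *m (E *m c) = adjmx c *m (adjmx E *m A *m E *m c).
  by rewrite adjmxM !mulmxA.
by rewrite Kc0 mulmx0.
Qed.

Lemma in_span_col j : in_span E (col j E).
Proof. by exists (delta_mx j 0); rewrite colE. Qed.

Lemma col_span_factor m (B : 'M[C]_(n, m)) :
  (forall j, in_span E (col j B)) -> exists M, B = E *m M.
Proof.
move=> /fin_all_exists [c Bc]; exists (\matrix_(k, j) c j k 0).
apply/matrixP => a j; have := congr1 (fun v : 'cV_n => v a 0) (Bc j).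
by rewrite !mxE => ->; apply: eq_bigr => k _; rewrite !mxE.
Qed.

Lemma intertwined_span_image (S : 'M[C]_n) (M : 'M[C]_d) :
  S *m E = E *m M -> M \in unitmx ->
  forall y, in_span E y <-> exists x, in_span E x /\ y = S *m x.
Proof.
move=> SEM Mu y; split=> [[c ->]|[x [[c ->] ->]]].
  exists (E *m (invmx M *m c)); split; first by exists (invmx M *m c).
  by rewrite mulmxA SEM -mulmxA mulKVmx.
by exists (M *m c); rewrite mulmxA SEM mulmxA.
Qed.

Variable S : 'M[C]_n.
Local Notation K1 := (gram E S).
Local Notation K2 := (gram E 1%:M).
Local Notation K3 := (gram E (invmx S)).

Lemma form_inv_defect (N : 'M[C]_d) :
  S \in unitmx -> adjmx S = S ->
  adjmx (S *m E - E *m N) *m invmx S *m (S *m E - E *m N) =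
    K1 - K2 *m N - (adjmx N *m K2 - adjmx N *m K3 *m N).
Proof.
move=> Su Sadj; rewrite !gramE adjmxB !adjmxM Sadj !mulmxBl !mulmxBr !mulmx1.
by rewrite !mulmxA !mulmxK // !mulmxKV.
Qed.

Hypotheses (Spos : strictly_positive S) (Eind : lin_indep E).

Let S_unit : S \in unitmx := strictly_positive_unitmx Spos.
Let Sinv_pos : strictly_positive (invmx S) := strictly_positive_inv Spos.
Let K2_unit : K2 \in unitmx := gram_unitmx (strictly_positive1 C n) Eind.
Let K3_unit : K3 \in unitmx := gram_unitmx Sinv_pos Eind.

Lemma intertwine_gram_inv (M : 'M[C]_d) :
  S *m E = E *m M -> invmx K3 = invmx K2 *m K1 *m invmx K2.
Proof.
move=> SEM.
have K2M : K2 *m M = K1 by rewrite !gramE mulmx1 -mulmxA -SEM mulmxA.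
have K3M : K3 *m M = K2.
  by rewrite !gramE mulmx1 -!mulmxA -SEM mulKmx.
rewrite -K2M mulKmx // -[LHS]mulmx1 -(mulmxV K2_unit) -{1}K3M.
by rewrite !mulmxA mulVmx // mul1mx.
Qed.

Lemma gram_inv_intertwine :
  invmx K3 = invmx K2 *m K1 *m invmx K2 -> S *m E = E *m (invmx K3 *m K2).
Proof.
move=> K3iE.
have K1E : K1 = K2 *m invmx K3 *m K2.
  by rewrite K3iE !mulmxA mulmxKV // mulmxV // mul1mx.
have adjN : adjmx (invmx K3 *m K2) = K2 *m invmx K3.
  by rewrite adjmxM adjmx_inv (gram_adj (proj1 Sinv_pos))
             (gram_adj (proj1 (strictly_positive1 C n))).
apply/eqP; rewrite -subr_eq0; apply/eqP.
apply: (strictly_positive_form_eq0 Sinv_pos).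
rewrite (form_inv_defect _ S_unit (proj1 Spos)).
by rewrite adjN K1E !mulmxA mulmxKV // !subrr.
Qed.

End Gram.

Theorem lemma10 (R : realType) (n d : nat) (S : 'M[R[i]]_n) (E : 'M[R[i]]_(n, d)) :
  strictly_positive S ->
  lin_indep E ->
  let K1 := gram E S in
  let K2 := gram E 1%:M in
  let K3 := gram E (invmx S) in
  (forall y : 'cV[R[i]]_n,
     in_span E y <-> exists x, in_span E x /\ y = S *m x)
  <-> invmx K3 = invmx K2 *m K1 *m invmx K2.
Proof.
move=> Spos Eind K1 K2 K3; split=> [span_stable|K3iE].
  have [M SEM] : exists M, S *m E = E *m M.
    apply: col_span_factor => j; apply/span_stable.
    by exists (col j E); split; [exact: in_span_col | rewrite !colE mulmxA].
  exact: (intertwine_gram_inv Spos Eind SEM).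
apply: (intertwined_span_image (gram_inv_intertwine Spos Eind K3iE)).
rewrite unitmx_mul unitmx_inv !gram_unitmx //.
  exact: strictly_positive1.
exact: strictly_positive_inv.
Qed.
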